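(* Let $q > 1$ be an integer. For all positive integers $n$ and $M$, $$\Pr\left(W \in C(n,q,M+1)\right) \geq \Pr\left(W' \in C(n,q,M)\right),$$ where $W$ is chosen uniformly at random from $\{x_0,\ldots,x_{q-1}\}^{M+1}$ and $W'$ is chosen uniformly at random from $\{x_0,\ldots,x_{q-1}\}^{M}$.
   Context: Fix the alphabet $\{x_0,\ldots,x_{q-1}\}$ of $q$ letters. A word $W$ is an instance of a word $V = y_0y_1\cdots y_{m-1}$ (each $y_i$ a letter) if $W = A_0A_1\cdots A_{m-1}$ with each $A_i$ a nonempty word and $A_i = A_j$ whenever $y_i = y_j$. The Zimin words are defined by $Z_0 := \varepsilon$ (the empty word) and $Z_{n+1} := Z_n z_n Z_n$ for distinct letters $z_0,z_1,\dots$. $C(n,q,M)$ denotes the set of words $W \in \{x_0,\ldots,x_{q-1}\}^M$ that are instances of $Z_n$. *)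

From mathcomp Require Import all_boot all_order all_algebra.
From mathcomp Require Import boolp.
Set Implicit Arguments. Unset Strict Implicit. Unset Printing Implicit Defensive.

(* Pattern words use letters in nat; Zimin letters z_i are represented by i. *)
Fixpoint zimin (n : nat) : seq nat :=
  match n with
  | 0 => [::]
  | n'.+1 => zimin n' ++ n' :: zimin n'
  end.

Definition is_instance (q : nat) (V : seq nat) (W : seq 'I_q) : Prop :=
  exists f : nat -> seq 'I_q,
    (forall y, y \in V -> f y != [::]) /\ W = flatten (map f V).

Definition C (n q M : nat) : {set M.-tuple 'I_q} :=
  [set W : M.-tuple 'I_q | `[< is_instance (zimin n) (val W) >]].

Definition probC (n q M : nat) : rat := (#|C n q M|)%:R / (q ^ M)%:R.

From mathcomp Require Import all_boot all_order all_algebra.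
From mathcomp Require Import boolp zify.
Set Implicit Arguments.
Unset Strict Implicit.
Unset Printing Implicit Defensive.

Import Order.TTheory GRing.Theory Num.Theory.
Local Open Scope ring_scope.

(* An instance of Z_{n+1} has the shape U A U with A the image of z_n, and its
   middle position lies inside A. Inserting any letter there stretches A and
   leaves an instance of Z_{n+1} one letter longer. The insertion is injective
   on pairs (word, letter) of a fixed length, so |C(n,q,M)| q <= |C(n,q,M+1)|,
   which is the claim after dividing by q^(M+1). *)

Section Insertion.
Variable T : Type.

Definition insert_at (i : nat) (x : T) (s : seq T) : seq T :=
  take i s ++ x :: drop i s.

Lemma size_insert_at i x s : (i <= size s)%N -> size (insert_at i x s) = (size s).+1.
Proof. by move=> le_i; rewrite size_cat /= size_take size_drop; case: ltnP; lia. Qed.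

Lemma insert_at_catl i x s1 s2 :
  (i <= size s1)%N -> insert_at i x (s1 ++ s2) = insert_at i x s1 ++ s2.
Proof.
rewrite /insert_at take_cat drop_cat leq_eqVlt => /orP[/eqP->|->]; last by rewrite -catA.
by rewrite ltnn subnn take0 drop0 take_size drop_size cats0 -catA.
Qed.

Lemma insert_at_catr i x s1 s2 : (size s1 <= i)%N ->
  insert_at i x (s1 ++ s2) = s1 ++ insert_at (i - size s1) x s2.
Proof. by rewrite /insert_at take_cat drop_cat ltnNge => ->; rewrite catA. Qed.

Lemma insert_at_inj i x y s t : (i <= size s)%N -> size s = size t ->
  insert_at i x s = insert_at i y t -> x = y /\ s = t.
Proof.
move=> le_i eq_st eq_ins.
have size_take_i u : size u = size s -> size (take i u) = i.
  by move=> eq_u; rewrite size_take eq_u; case: ltnP; lia.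
have := congr1 (drop i) eq_ins; rewrite !drop_size_cat ?size_take_i // => -[-> eq_drop].
split=> //; rewrite -(cat_take_drop i s) -(cat_take_drop i t) eq_drop.
by have := congr1 (take i) eq_ins; rewrite !take_size_cat ?size_take_i // => ->.
Qed.

Lemma insert_tupleP n (i : 'I_n.+1) (x : T) (t : n.-tuple T) : size (insert_at i x t) == n.+1.
Proof. by rewrite size_insert_at size_tuple // -ltnS. Qed.

Definition insert_tuple n (i : 'I_n.+1) (x : T) (t : n.-tuple T) : n.+1.-tuple T :=
  Tuple (insert_tupleP i x t).

Lemma insert_tuple_inj n (i : 'I_n.+1) :
  injective (fun p : n.-tuple T * T => insert_tuple i p.2 p.1).
Proof.
move=> [s x] [t y] /(congr1 val) /= /insert_at_inj.
rewrite !size_tuple => /(_ (ltn_ord i) erefl) [-> /val_inj->] //.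
Qed.

End Insertion.

Lemma zimin_lt n y : y \in zimin n -> (y < n)%N.
Proof.
elim: n => [|n IH] //=; rewrite mem_cat in_cons => /or3P[/IH|/eqP->|/IH] //.
all: exact: ltnW.
Qed.

Lemma half_mid a b : (a <= (a + (b + a))./2 <= a + b)%N.
Proof. by rewrite geq_half_double leq_half_double; apply/andP; split; lia. Qed.

Lemma is_instance_zimin_insert_mid q n (W : seq 'I_q) x :
  is_instance (zimin n.+1) W -> is_instance (zimin n.+1) (insert_at (size W)./2 x W).
Proof.
case=> f [f_nonempty ->]; rewrite /= map_cat flatten_cat /=.
set U := flatten _; set A := f n.
have /andP[le_U le_UA] := half_mid (size U) (size A).
rewrite !size_cat.
pose g y := if y == n then insert_at ((size U + (size A + size U))./2 - size U) x A else f y.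
exists g; split=> [y y_in|].
  by rewrite /g; case: ifP => _; [rewrite /insert_at -size_eq0 size_cat addnS | exact: f_nonempty].
have g_zimin : map g (zimin n) = map f (zimin n).
  by apply/eq_in_map => y /zimin_lt; rewrite /g; case: eqP => // ->; rewrite ltnn.
rewrite map_cat flatten_cat /= g_zimin -/U /g eqxx.
rewrite insert_at_catr // insert_at_catl //; lia.
Qed.

Lemma card_C_mul_le n q M : (0 < n)%N -> (#|C n q M| * q <= #|C n q M.+1|)%N.
Proof.
case: n => // n _.
have mid : (M./2 < M.+1)%N by rewrite ltnS leq_half_double; lia.
have -> : (#|C n.+1 q M| * q = #|setX (C n.+1 q M) [set: 'I_q]|)%N.
  by rewrite cardsX cardsT card_ord.
rewrite -(card_imset _ (insert_tuple_inj (i := Ordinal mid))).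
apply/subset_leq_card/subsetP => _ /imsetP[[W x] /setXP[+ _] ->].
rewrite !inE => /asboolP inst_W; apply/asboolP.
by have := is_instance_zimin_insert_mid x inst_W; rewrite size_tuple.
Qed.

Theorem mainTheorem4 (q : nat) (hq : (1 < q)%N) (n M : nat)
  (hn : (0 < n)%N) (hM : (0 < M)%N) :
  probC n q M.+1 >= probC n q M.
Proof.
have q_gt0 : (0 : rat) < q%:R by rewrite ltr0n; lia.
have qM_gt0 : (0 : rat) < (q ^ M)%:R by rewrite ltr0n expn_gt0 ltnW.
rewrite /probC expnS natrM invfM mulrA ler_pM2r ?invr_gt0 //.
by rewrite ler_pdivlMr // -natrM ler_nat card_C_mul_le.
Qed.
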